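(* Let $\mathcal{T}$ be a $\operatorname{Hom}$-finite Krull–Schmidt triangulated category over an algebraically closed field and $\mathcal{I}$ an ideal. Every $\mathcal{I}$-source map is left $\mathcal{I}$-irreducible, and every $\mathcal{I}$-sink map is right $\mathcal{I}$-irreducible.
   Context: Composition of $h_1:X\to U$, $h_2:U\to Y$ is $h_2h_1$. An ideal: subgroups $\mathcal{I}(X,Y)\subseteq\operatorname{Hom}(X,Y)$ closed under composition. An $\mathcal{I}$-source map of $X$ is a morphism $f:X\to M$ in $\mathcal{I}$ such that every morphism of $\mathcal{I}$ starting at $X$ factors through $f$, and which is left minimal ($gf=f$ implies $g$ invertible); $\mathcal{I}$-sink maps are dual (right minimal right $\mathcal{I}$-approximations). A morphism $h$ is left $\mathcal{I}$-irreducible if $h\in\mathcal{I}$ and for every factorization $h=h_2h_1$ with $h_1\in\mathcal{I}$, $h_2$ is a split epimorphism; it is right $\mathcal{I}$-irreducible if $h\in\mathcal{I}$ and for every factorization $h=h_2h_1$ with $h_2\in\mathcal{I}$, $h_1$ is a split monomorphism. *)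

From HB Require Import structures.
From mathcomp Require Import all_boot all_order all_algebra.
Set Implicit Arguments. Unset Strict Implicit. Unset Printing Implicit Defensive.
Import GRing.Theory.
Local Open Scope ring_scope.

(* Mor X Y is a finite-dimensional k-vector space (vectType k): this   *)
(* encodes Mor-finiteness.  comp g f is the composite  g f  (first f). *)
Record kcat (k : fieldType) := KCat {
  Obj : Type;
  Mor : Obj -> Obj -> vectType k;
  comp : forall X Y Z : Obj, Mor Y Z -> Mor X Y -> Mor X Z;
  idm : forall X : Obj, Mor X X;
  compA : forall W X Y Z (h : Mor Y Z) (g : Mor X Y) (f : Mor W X),
      comp h (comp g f) = comp (comp h g) f;
  comp1m : forall X Y (f : Mor X Y), comp (idm Y) f = f;
  compm1 : forall X Y (f : Mor X Y), comp f (idm X) = f;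
  comp_linl : forall X Y Z (a : k) (g1 g2 : Mor Y Z) (f : Mor X Y),
      comp (a *: g1 + g2) f = a *: comp g1 f + comp g2 f;
  comp_linr : forall X Y Z (a : k) (g : Mor Y Z) (f1 f2 : Mor X Y),
      comp g (a *: f1 + f2) = a *: comp g f1 + comp g f2
}.
Arguments Mor {k C} : rename.
Arguments comp {k C X Y Z} : rename.
Arguments idm {k C} : rename.

Section Defs.
Variables (k : fieldType) (C : kcat k).
Local Notation Ob := (Obj C).

Definition is_iso (X Y : Ob) (f : Mor X Y) : Prop :=
  exists g : Mor Y X, comp g f = idm X /\ comp f g = idm Y.

Definition split_epi (X Y : Ob) (f : Mor X Y) : Prop :=
  exists s : Mor Y X, comp f s = idm Y.

Definition split_mono (X Y : Ob) (f : Mor X Y) : Prop :=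
  exists r : Mor Y X, comp r f = idm X.

Definition is_zero_obj (Z : Ob) : Prop := idm Z = 0.

Definition is_direct_sum (X : Ob) (n : nat) (Xs : 'I_n -> Ob) : Prop :=
  exists (inj : forall i, Mor (Xs i) X) (prj : forall i, Mor X (Xs i)),
    [/\ forall i, comp (prj i) (inj i) = idm (Xs i),
        forall i j, i != j -> comp (prj i) (inj j) = 0 &
        \sum_(i < n) comp (inj i) (prj i) = idm X].

Definition additive : Prop :=
  (exists Z : Ob, is_zero_obj Z) /\
  forall X Y : Ob, exists P : Ob,
    is_direct_sum P (fun i : 'I_2 => if val i == 0%N then X else Y).

Definition local_end (X : Ob) : Prop :=
  idm X != 0 /\ forall e : Mor X X, is_iso e \/ is_iso (idm X - e).

Definition krull_schmidt : Prop :=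
  additive /\
  forall X : Ob, exists (n : nat) (Xs : 'I_n -> Ob),
    is_direct_sum X Xs /\ forall i, local_end (Xs i).

Record triangulation := Triangulation {
  shift : Ob -> Ob;
  shiftm : forall X Y : Ob, Mor X Y -> Mor (shift X) (shift Y);
  dist : forall X Y Z : Ob, Mor X Y -> Mor Y Z -> Mor Z (shift X) -> Prop;
  shiftm_lin : forall X Y (a : k) (f g : Mor X Y),
      shiftm (a *: f + g) = a *: shiftm f + shiftm g;
  shiftm_id : forall X, shiftm (idm X) = idm (shift X);
  shiftm_comp : forall X Y Z (g : Mor Y Z) (f : Mor X Y),
      shiftm (comp g f) = comp (shiftm g) (shiftm f);
  shiftm_inj : forall X Y (f g : Mor X Y), shiftm f = shiftm g -> f = g;
  shiftm_surj : forall X Y (h : Mor (shift X) (shift Y)),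
      exists f : Mor X Y, shiftm f = h;
  shift_esurj : forall Y, exists X (f : Mor (shift X) Y), is_iso f;
  tr1_iso : forall X Y Z X' Y' Z' (u : Mor X Y) (v : Mor Y Z) (w : Mor Z (shift X))
      (u' : Mor X' Y') (v' : Mor Y' Z') (w' : Mor Z' (shift X'))
      (a : Mor X X') (b : Mor Y Y') (c : Mor Z Z'),
      is_iso a -> is_iso b -> is_iso c ->
      comp b u = comp u' a -> comp c v = comp v' b ->
      comp (shiftm a) w = comp w' c ->
      dist u v w -> dist u' v' w';
  tr1_id : forall X Z0, is_zero_obj Z0 ->
      dist (idm X) (0 : Mor X Z0) (0 : Mor Z0 (shift X));
  tr1_ex : forall X Y (u : Mor X Y),
      exists Z (v : Mor Y Z) (w : Mor Z (shift X)), dist u v w;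
  tr2 : forall X Y Z (u : Mor X Y) (v : Mor Y Z) (w : Mor Z (shift X)),
      dist u v w <-> dist v w (- shiftm u);
  tr3 : forall X Y Z X' Y' Z' (u : Mor X Y) (v : Mor Y Z) (w : Mor Z (shift X))
      (u' : Mor X' Y') (v' : Mor Y' Z') (w' : Mor Z' (shift X'))
      (a : Mor X X') (b : Mor Y Y'),
      dist u v w -> dist u' v' w' -> comp b u = comp u' a ->
      exists c : Mor Z Z', comp c v = comp v' b /\ comp (shiftm a) w = comp w' c;
  tr4 : forall X Y Z Q1 Q2 Q3 (f : Mor X Y) (g : Mor Y Z)
      (p1 : Mor Y Q1) (d1 : Mor Q1 (shift X))
      (p2 : Mor Z Q2) (d2 : Mor Q2 (shift X))
      (p3 : Mor Z Q3) (d3 : Mor Q3 (shift Y)),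
      dist f p1 d1 -> dist (comp g f) p2 d2 -> dist g p3 d3 ->
      exists (a : Mor Q1 Q2) (b : Mor Q2 Q3),
        [/\ dist a b (comp (shiftm p1) d3),
            comp a p1 = comp p2 g, comp d2 a = d1,
            comp b p2 = p3 & comp d3 b = comp (shiftm f) d2]
}.

Definition is_ideal (I : forall X Y : Ob, Mor X Y -> Prop) : Prop :=
  [/\ forall X Y, I X Y 0,
      forall X Y (f g : Mor X Y), I X Y f -> I X Y g -> I X Y (f - g),
      forall X Y Z (g : Mor Y Z) (f : Mor X Y), I X Y f -> I X Z (comp g f) &
      forall X Y Z (g : Mor Y Z) (f : Mor X Y), I Y Z g -> I X Z (comp g f)].

Variable I : forall X Y : Ob, Mor X Y -> Prop.

Definition source_map (X M : Ob) (f : Mor X M) : Prop :=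
  [/\ I f,
      forall Y (h : Mor X Y), I h -> exists g : Mor M Y, h = comp g f &
      forall g : Mor M M, comp g f = f -> is_iso g].

Definition sink_map (M X : Ob) (f : Mor M X) : Prop :=
  [/\ I f,
      forall Y (h : Mor Y X), I h -> exists g : Mor Y M, h = comp f g &
      forall g : Mor M M, comp f g = f -> is_iso g].

Definition left_irreducible (X Y : Ob) (h : Mor X Y) : Prop :=
  I h /\ forall U (h1 : Mor X U) (h2 : Mor U Y),
    h = comp h2 h1 -> I h1 -> split_epi h2.

Definition right_irreducible (X Y : Ob) (h : Mor X Y) : Prop :=
  I h /\ forall U (h1 : Mor X U) (h2 : Mor U Y),
    h = comp h2 h1 -> I h2 -> split_mono h1.

End Defs.

From Pilot Require Import Defs.
From mathcomp Require Import all_boot all_order all_algebra.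

(* Left minimality does all the work. If a source map f factors as f = h2 h1
   with h1 in I, then h1 = g f for some g, so (h2 g) f = f forces h2 g to be
   invertible, and g composed with its inverse splits h2. Sink maps are dual. *)

Section IrreducibleOfMinimal.

Variables (k : fieldType) (C : kcat k).

Lemma split_epi_of_iso_comp {Y Z : Obj C} (g : Mor Y Z) (h : Mor Z Y) :
  is_iso (Defs.comp g h) -> split_epi g.
Proof.
by move=> [j [_ ghj]]; exists (Defs.comp h j); rewrite Defs.compA.
Qed.

Lemma split_mono_of_iso_comp {X Y : Obj C} (g : Mor X Y) (h : Mor Y X) :
  is_iso (Defs.comp h g) -> split_mono g.
Proof.
by move=> [j [jhg _]]; exists (Defs.comp j h); rewrite -Defs.compA.
Qed.

Variable I : forall X Y : Obj C, Mor X Y -> Prop.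

Lemma source_map_left_irreducible (X M : Obj C) (f : Mor X M) :
  source_map I f -> left_irreducible I f.
Proof.
move=> [If factor_f minimal_f]; split=> // U h1 h2 f_eq Ih1.
have [g h1_eq] := factor_f _ _ Ih1.
apply: (split_epi_of_iso_comp _ g); apply: minimal_f.
by rewrite -Defs.compA -h1_eq -f_eq.
Qed.

Lemma sink_map_right_irreducible (M X : Obj C) (f : Mor M X) :
  sink_map I f -> right_irreducible I f.
Proof.
move=> [If factor_f minimal_f]; split=> // U h1 h2 f_eq Ih2.
have [g h2_eq] := factor_f _ _ Ih2.
apply: (split_mono_of_iso_comp _ g); apply: minimal_f.
by rewrite Defs.compA -h2_eq -f_eq.
Qed.

End IrreducibleOfMinimal.

Theorem lemma4p3 (k : closedFieldType) (C : kcat k)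
    (T : triangulation C) (HKS : krull_schmidt C)
    (I : forall X Y : Obj C, Mor X Y -> Prop) (HI : is_ideal I) :
  (forall (X M : Obj C) (f : Mor X M), source_map I f -> left_irreducible I f) /\
  (forall (M X : Obj C) (f : Mor M X), sink_map I f -> right_irreducible I f).
Proof.
split; [exact: source_map_left_irreducible | exact: sink_map_right_irreducible].
Qed.
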